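(* Let $G=(V,E,\{w_j\})$ be a reduced instance of the line highway problem with $[s,\ell]$-valuation, and let $r=s/\ell$. Let $\boldsymbol{\tau}$ be the (random) price vector output by the algorithm Line_Cut described in the context. Then \[ \frac{\mathrm{Opt}_{\rm coup}(G)}{\mathbf{E}[\mathrm{Profit}_{\rm coup}(\boldsymbol{\tau})]}\le 4(1-\ln r), \] where the expectation is over the random choices of the algorithm.
   Context: For integers $a\le b$, $[a,b]=\{a,a+1,\dots,b\}$. A reduced instance of the line highway problem is $G=(V,E,\{w_j\})$ with $V=[1,n]$ (items) and a finite multiset $E=\{e_1,\dots,e_m\}$ of customers, each $e_j=[j_s,j_t]$ with $1\le j_s\le j_t\le n$, having valuation $w_j>0$; valuations are integers. It has $[s,\ell]$-valuation if $s=\min_j w_j$ and $\ell=\max_j w_j$. For a price vector $\mathbf p\in\mathbb R^n$ (prices may be negative), $p(e_j)=\sum_{i\in e_j}p_i$, the coupon-model profit is $\mathrm{Profit}_{\rm coup}(\mathbf p)=\sum_{j:\,w_j\ge p(e_j)}\max\{p(e_j),0\}$, and $\mathrm{Opt}_{\rm coup}(G)=\max_{\mathbf p}\mathrm{Profit}_{\rm coup}(\mathbf p)$. The DAG representation of $G$ has vertices $u_0,\dots,u_n$ and, for each $e_j=[j_s,j_t]$, an arc $u_{j_s-1}\to u_{j_t}$ of weight $w_j$; a partial-sum vector $(s_0,\dots,s_n)$ determines prices $p_i=s_i-s_{i-1}$. Algorithm Line_Cut: construct the DAG representation; mark each vertex independently with probability $1/2$; let $L$ be the marked and $R$ the unmarked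 vertices; for each integer $x\in[s,\ell]$ assign partial sum $0$ to all vertices of $L$ and $x$ to all vertices of $R$, obtaining a price vector $\boldsymbol\tau_x$; output a $\boldsymbol\tau$ among $\boldsymbol\tau_s,\dots,\boldsymbol\tau_\ell$ maximizing $\mathrm{Profit}_{\rm coup}$. *)

From mathcomp Require Import all_boot all_order all_algebra.
From mathcomp Require Import all_classical all_reals exp.
Set Implicit Arguments. Unset Strict Implicit. Unset Printing Implicit Defensive.
Import Order.TTheory GRing.Theory Num.Theory.
Local Open Scope ring_scope.
Local Open Scope classical_set_scope.

(* A customer e_j = [j_s, j_t] with valuation w_j, encoded as ((j_s, j_t), w_j). *)
Definition customer := (nat * nat * nat)%type.
Definition cs (c : customer) : nat := c.1.1.
Definition ct (c : customer) : nat := c.1.2.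
Definition cw (c : customer) : nat := c.2.

Definition reduced_instance (n : nat) (E : seq customer) : Prop :=
  E != [::] /\
  forall c, c \in E -> [/\ (1 <= cs c)%N, (cs c <= ct c)%N, (ct c <= n)%N & (0 < cw c)%N].

Definition val_min (E : seq customer) : nat :=
  \big[minn/cw (head ((0,0),0)%N E)]_(c <- E) cw c.
Definition val_max (E : seq customer) : nat := \max_(c <- E) cw c.

Section Profit.
Variable R : realType.

(* price vector p : items (indexed by nat, item i in [1,n]) -> R ;
   p(e_j) = sum_{i in [j_s, j_t]} p_i *)
Definition bundle_price (p : nat -> R) (c : customer) : R :=
  \sum_(cs c <= i < (ct c).+1) p i.

Definition profit_coup (E : seq customer) (p : nat -> R) : R :=
  \sum_(c <- E | bundle_price p c <= (cw c)%:R) Num.max (bundle_price p c) 0.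

Definition opt_coup (E : seq customer) : R := sup (range (profit_coup E)).

(* Line_Cut.  A marking of the DAG vertices u_0..u_n is L : {ffun 'I_n.+1 -> bool}
   (true = marked, i.e. in L).  Partial sums: 0 on marked vertices, x on unmarked;
   prices p_i = s_i - s_{i-1}. *)
Definition partial_sum (n : nat) (L : {ffun 'I_n.+1 -> bool}) (x : nat) (i : nat) : R :=
  if L (inord i) then 0 else x%:R.

Definition tau (n : nat) (L : {ffun 'I_n.+1 -> bool}) (x : nat) : nat -> R :=
  fun i => partial_sum L x i - partial_sum L x i.-1.

(* profit of the vector output by Line_Cut for marking L: a maximizer among
   tau_s, ..., tau_l, so its profit is the maximum of these profits
   (all profits are >= 0, so 0 is a neutral start). *)
Definition line_cut_profit (n : nat) (E : seq customer) (L : {ffun 'I_n.+1 -> bool}) : R :=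
  \big[Num.max/0]_(val_min E <= x < (val_max E).+1) profit_coup E (tau L x).

(* Expectation over independent fair marks of the n+1 vertices = uniform
   distribution on the 2^(n+1) markings. *)
Definition expected_line_cut_profit (n : nat) (E : seq customer) : R :=
  (2 ^+ n.+1)^-1 * \sum_(L : {ffun 'I_n.+1 -> bool}) line_cut_profit E L.

End Profit.

From mathcomp Require Import all_boot all_order all_algebra.
From mathcomp Require Import all_classical all_reals exp.
From mathcomp Require Import ring lra zify.
Set Implicit Arguments. Unset Strict Implicit. Unset Printing Implicit Defensive.
Import Order.TTheory GRing.Theory Num.Theory.
Local Open Scope ring_scope.

(* Opt is at most the total valuation W = sum_j w_j.  Let N(x) be the number of
   customers with w_j >= x.  For a fixed x, a customer with w_j >= x pays x under
   tau_x whenever u_(j_s - 1) is marked and u_(j_t) is not, which happens with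
   probability 1/4; hence x N(x) <= 4 E[profit].  By the layer-cake formula
   W = sum_(x <= l) N(x) = s N(s) + sum_(s < x <= l) N(x), and bounding each
   x N(x) by 4 E[profit] gives W <= 4 E[profit] (1 + H_l - H_s)
   <= 4 E[profit] (1 + ln (l / s)). *)

Section Markings.
Variables (T : finType) (a b : T).
Hypothesis a_neq_b : a != b.

Definition ffun_flip (v : T) (L : {ffun T -> bool}) : {ffun T -> bool} :=
  [ffun i => (i == v) (+) L i].

Lemma ffun_flipK v : involutive (ffun_flip v).
Proof. by move=> L; apply/ffunP => i; rewrite !ffunE addKb. Qed.

Let pattern_count (p q : bool) : nat :=
  \sum_(L : {ffun T -> bool}) ((L a == p) && (L b == q)).

Let pattern_count_flipl p q : pattern_count p q = pattern_count (~~ p) q.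
Proof.
rewrite /pattern_count (reindex_inj (can_inj (ffun_flipK a))).
apply: eq_bigr => L _; rewrite !ffunE eqxx [b == a]eq_sym (negbTE a_neq_b).
by case: (L a); case: p.
Qed.

Let pattern_count_flipr p q : pattern_count p q = pattern_count p (~~ q).
Proof.
rewrite /pattern_count (reindex_inj (can_inj (ffun_flipK b))).
apply: eq_bigr => L _; rewrite !ffunE eqxx (negbTE a_neq_b).
by case: (L b); case: q.
Qed.

Lemma sum_cut_markings :
  ((\sum_(L : {ffun T -> bool}) (L a && ~~ L b)) * 4 = 2 ^ #|T|)%N.
Proof.
have total : (pattern_count true true + pattern_count true false
  + pattern_count false true + pattern_count false false = 2 ^ #|T|)%N.
  rewrite /pattern_count -!big_split /= (eq_bigr (fun=> 1%N)); last first.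
    by move=> L _; case: (L a); case: (L b).
  by rewrite sum1_card card_ffun card_bool.
have -> : (\sum_(L : {ffun T -> bool}) (L a && ~~ L b) = pattern_count true false)%N.
  by apply: eq_bigr => L _; case: (L a); case: (L b).
rewrite -total (pattern_count_flipl false true) (pattern_count_flipl false false).
by rewrite (pattern_count_flipr true true) /=; lia.
Qed.

End Markings.

Definition demand (E : seq customer) (x : nat) : nat :=
  (\sum_(c <- E) (x <= cw c))%N.

Section LineCut.
Variable R : realType.

Lemma bundle_price_tau n (L : {ffun 'I_n.+1 -> bool}) x c : (cs c <= ct c)%N ->
  bundle_price (tau R L x) c =
  partial_sum R L x (ct c) - partial_sum R L x (cs c).-1.
Proof.
move=> le_st; rewrite /bundle_price.
by rewrite (telescope_sumr_eq (fun k => partial_sum R L x k.-1)) // leqW.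
Qed.

(* Under [tau x] the price of [[j_s, j_t]] is [x] exactly when u_(j_s - 1) is
   marked and u_(j_t) is not. *)
Lemma profit_tau_ge_cut n E (L : {ffun 'I_n.+1 -> bool}) x :
  (forall c, c \in E -> (cs c <= ct c)%N) ->
  \sum_(c <- E)
     ((x <= cw c)%N && L (inord (cs c).-1) && ~~ L (inord (ct c)))%:R * x%:R
  <= profit_coup E (tau R L x).
Proof.
move=> hE; rewrite /profit_coup [leRHS]big_mkcond big_seq [leRHS]big_seq /=.
apply: ler_sum => c /hE le_st; rewrite bundle_price_tau // /partial_sum.
have payment_ge0 (y : R) : 0 <= (if y <= (cw c)%:R then Num.max y 0 else 0).
  by case: ifP => _; rewrite ?le_max lexx ?orbT.
case: leqP => [x_le_w|]; last by rewrite mul0r payment_ge0.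
case: (L _) => /=; last by rewrite mul0r payment_ge0.
case: (L _) => /=; first by rewrite mul0r payment_ge0.
by rewrite mul1r subr0 ler_nat x_le_w le_max lexx.
Qed.

Lemma profit_tau_le_line_cut n E (L : {ffun 'I_n.+1 -> bool}) x :
  (val_min E <= x <= val_max E)%N ->
  profit_coup E (tau R L x) <= line_cut_profit R E L.
Proof.
move=> x_range; rewrite /line_cut_profit.
apply: (@le_bigmax_seq _ R _ _ 0 x xpredT (fun y => profit_coup E (tau R L y))) => //.
by rewrite mem_index_iota ltnS.
Qed.

Lemma expected_line_cut_profit_ge n E x :
  (forall c, c \in E -> [/\ (1 <= cs c)%N, (cs c <= ct c)%N & (ct c <= n)%N]) ->
  (val_min E <= x <= val_max E)%N ->
  x%:R * (demand E x)%:R <= 4 * expected_line_cut_profit R n E.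
Proof.
move=> hE x_range.
pose sold (L : {ffun 'I_n.+1 -> bool}) c : bool :=
  (x <= cw c)%N && L (inord (cs c).-1) && ~~ L (inord (ct c)).
have cut_count c : c \in E -> \sum_(L : {ffun 'I_n.+1 -> bool})
    (L (inord (cs c).-1) && ~~ L (inord (ct c)))%:R = 2 ^+ n.+1 / 4 :> R.
  move=> /hE [s_ge1 s_le_t t_le_n].
  have ends_neq : (inord (cs c).-1 : 'I_n.+1) != inord (ct c).
    by apply/negP => /eqP /(congr1 val) /=; rewrite !inordK; lia.
  have := sum_cut_markings ends_neq; rewrite card_ord => /(congr1 (GRing.natmul (1 : R))).
  by rewrite natrM natr_sum natrX => <-; rewrite mulfK // pnatr_eq0.
have sold_sum : \sum_(L : {ffun 'I_n.+1 -> bool}) \sum_(c <- E) (sold L c)%:R * x%:R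
    = 2 ^+ n.+1 / 4 * (x%:R * (demand E x)%:R) :> R.
  rewrite exchange_big /= /demand natr_sum !big_distrr /= big_seq [RHS]big_seq.
  apply: eq_bigr => c cE; rewrite -(cut_count c cE) big_distrl /=.
  by apply: eq_bigr => L _; rewrite /sold; case: (_ <= _)%N; case: (L _); case: (L _);
    rewrite ?(mul0r, mulr0, mul1r, mulr1).
have two_pow_gt0 : (0 : R) < 2 ^+ n.+1 by rewrite exprn_gt0.
suff -> : x%:R * (demand E x)%:R = 4 * ((2 ^+ n.+1)^-1 *
    \sum_(L : {ffun 'I_n.+1 -> bool}) \sum_(c <- E) (sold L c)%:R * x%:R) :> R.
  rewrite ler_pM2l // ler_pM2l ?invr_gt0 //; apply: ler_sum => L _.
  apply: le_trans (profit_tau_le_line_cut L x_range).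
  by apply: profit_tau_ge_cut => c /hE [].
by rewrite sold_sum; field; rewrite gt_eqF.
Qed.

End LineCut.

Lemma sum_leq_indicator (w l : nat) : (w <= l)%N ->
  (\sum_(1 <= x < l.+1) (x <= w) = w)%N.
Proof.
move=> w_le_l; rewrite (@big_cat_nat _ _ _ w.+1) //=.
rewrite (eq_big_nat _ _ (F2 := fun=> 1%N)) => [|x /andP [_]]; last by rewrite ltnS => ->.
rewrite [X in (_ + X)%N](eq_big_nat _ _ (F2 := fun=> 0%N)) => [|x /andP [w_lt_x _]].
  by rewrite !sum_nat_const_nat muln1 muln0 addn0 subn1.
by rewrite leqNgt w_lt_x.
Qed.

Lemma sum_cw_demand E l : (forall c, c \in E -> cw c <= l)%N ->
  (\sum_(c <- E) cw c = \sum_(1 <= x < l.+1) demand E x)%N.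
Proof.
move=> cw_le; rewrite [RHS]exchange_big /= big_seq [RHS]big_seq.
by apply: eq_bigr => c /cw_le /sum_leq_indicator ->.
Qed.

Section LayerCake.
Variable R : realType.

Lemma inv_succ_le_ln_diff (x : R) : 0 < x -> (x + 1)^-1 <= ln (x + 1) - ln x.
Proof.
move=> x_gt0; have x1_gt0 : 0 < x + 1 by rewrite addr_gt0.
have inv_bound : -1 < - (x + 1)^-1 by rewrite ltrN2 invf_lt1 // ltrDr.
have := le_ln1Dx inv_bound.
have -> : 1 - (x + 1)^-1 = x / (x + 1) by field; rewrite gt_eqF.
by rewrite ln_div ?posrE //; lra.
Qed.

Lemma harmonic_le_ln (s l : nat) : (0 < s)%N -> (s <= l)%N ->
  \sum_(s <= x < l) (x.+1%:R : R)^-1 <= ln l%:R - ln s%:R.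
Proof.
move=> s_gt0 s_le_l; rewrite -(telescope_sumr (fun k => ln k%:R)) //.
apply: ler_sum_nat => x /andP [s_le_x _].
rewrite -addn1 natrD; apply: inv_succ_le_ln_diff.
by rewrite ltr0n (leq_trans s_gt0).
Qed.

Lemma sum_cw_le_ln E (s l : nat) (K : R) :
  (0 < s)%N -> (s <= l)%N -> (forall c, c \in E -> s <= cw c <= l)%N ->
  (forall x, (s <= x <= l)%N -> x%:R * (demand E x)%:R <= K) ->
  (\sum_(c <- E) cw c)%:R <= K * (1 + (ln l%:R - ln s%:R)).
Proof.
move=> s_gt0 s_le_l cw_range demand_bound.
have K_ge0 : 0 <= K.
  by apply: le_trans (demand_bound s _); rewrite ?mulr_ge0 ?leqnn.
rewrite (@sum_cw_demand E l) => [|c /cw_range /andP [] //].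
rewrite natr_sum (@big_cat_nat _ _ _ s.+1) //= mulrDr mulr1; apply: lerD.
  rewrite (eq_big_nat _ _ (F2 := fun=> (demand E s)%:R)) => [|x /andP [_]].
    by rewrite sumr_const_nat subn1 /= -[X in X <= _]mulr_natl demand_bound ?leqnn.
  rewrite ltnS => x_le_s; congr (_%:R); apply: eq_big_seq => c /cw_range /andP [s_le _].
  by rewrite s_le (leq_trans x_le_s s_le).
rewrite big_add1 /=.
apply: le_trans (_ : _ <= \sum_(s <= x < l) K * (x.+1%:R)^-1) _.
  apply: ler_sum_nat => x /andP [s_le_x x_lt_l].
  rewrite ler_pdivlMr ?ltr0n // mulrC demand_bound //.
  by rewrite x_lt_l (leq_trans s_le_x).
by rewrite -big_distrr /= ler_wpM2l // harmonic_le_ln.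
Qed.

End LayerCake.

Lemma val_min_le E c : c \in E -> (val_min E <= cw c)%N.
Proof.
by move=> cE; rewrite /val_min -minEnat; exact: (@ge_bigmin_seq _ _ _ E _ c xpredT cw).
Qed.

Lemma le_val_max E c : c \in E -> (cw c <= val_max E)%N.
Proof. by move=> cE; exact: (@leq_bigmax_seq _ E xpredT cw c cE). Qed.

Lemma val_min_gt0 E : E != [::] -> (forall c, c \in E -> 0 < cw c)%N ->
  (0 < val_min E)%N.
Proof.
case: E => [//|c0 E] _ cw_gt0; rewrite /val_min big_seq.
apply: (big_ind (fun m => 0 < m)%N) => [|u v u_gt0 v_gt0|c /cw_gt0 //].
  exact/cw_gt0/mem_head.
by rewrite leq_min u_gt0.
Qed.

Lemma profit_coup_le_sum_cw (R : realType) E (p : nat -> R) :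
  profit_coup E p <= (\sum_(c <- E) cw c)%:R.
Proof.
rewrite natr_sum /profit_coup big_mkcond /=; apply: ler_sum => c _.
by case: ifP => [price_le|_]; rewrite ?ge_max ?price_le ler0n.
Qed.

Lemma opt_coup_le_sum_cw (R : realType) E : opt_coup R E <= (\sum_(c <- E) cw c)%:R.
Proof.
apply: ge_sup; first by exists (profit_coup E (fun=> 0)), (fun=> 0).
by move=> _ [p _ <-]; exact: profit_coup_le_sum_cw.
Qed.

Theorem theorem2 (R : realType) (n : nat) (E : seq customer) :
  reduced_instance n E ->
  let r : R := (val_min E)%:R / (val_max E)%:R in
  opt_coup R E <= 4 * (1 - ln r) * expected_line_cut_profit R n E.
Proof.
move=> [E_neq0 hE] /=.
have [c0 c0E] : exists c, c \in E.
  by case: E E_neq0 {hE} => [//|c E' _]; exists c; exact: mem_head.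
have cw_range c : c \in E -> (val_min E <= cw c <= val_max E)%N.
  by move=> cE; rewrite val_min_le ?le_val_max.
have s_gt0 : (0 < val_min E)%N by apply: val_min_gt0 => // c /hE [].
have s_le_l : (val_min E <= val_max E)%N.
  by case/andP: (cw_range c0 c0E); apply: leq_trans.
apply: le_trans (opt_coup_le_sum_cw R E) _.
apply: le_trans (@sum_cw_le_ln R E _ _ (4 * expected_line_cut_profit R n E)
  s_gt0 s_le_l cw_range _) _.
  by move=> x x_range; apply: expected_line_cut_profit_ge => // c /hE [].
have l_gt0 : (0 < val_max E)%N := leq_trans s_gt0 s_le_l.
by rewrite ln_div ?posrE ?ltr0n // opprB mulrAC.
Qed.
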